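(* For every $\eta\in\mathcal{L}$, $c_\pi(\eta)\in[-B^{1/(1+\epsilon)},\,B^{1/(1+\epsilon)}(1-\pi)^{-1/(1+\epsilon)}]$ and $x_\pi(\eta)\in[-B^{1/(1+\epsilon)}\pi^{-1/(1+\epsilon)},\,B^{1/(1+\epsilon)}(1-\pi)^{-1/(1+\epsilon)}]$.
   Context: $\pi\in(0,1)$, $\epsilon>0$, $B>0$. $\mathcal{L}=\{\eta\in\mathcal{P}(\mathbb{R}):\mathbb{E}_\eta|X|^{1+\epsilon}\le B\}$. $F_\eta(x)=\eta((-\infty,x])$; value-at-risk $x_\pi(\eta)=\min\{z\in\mathbb{R}:F_\eta(z)\ge\pi\}$; conditional value-at-risk $c_\pi(\eta)=\frac{F_\eta(x_\pi(\eta))-\pi}{1-\pi}x_\pi(\eta)+\frac{1}{1-\pi}\int_{(x_\pi(\eta),\infty)}y\,dF_\eta(y)$. *)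

From HB Require Import structures.
From mathcomp Require Import all_boot all_order all_algebra.
From mathcomp Require Import all_classical all_reals all_analysis.
Set Implicit Arguments. Unset Strict Implicit. Unset Printing Implicit Defensive.
Import Order.TTheory GRing.Theory Num.Theory.
Local Open Scope classical_set_scope.
Local Open Scope ring_scope.

Definition in_L (R : realType) (eps B : R) (eta : probability R R) : Prop :=
  (\int[eta]_x ((`|x| `^ (1 + eps))%:E) <= B%:E)%E.

Definition cdf (R : realType) (eta : probability R R) (x : R) : R :=
  fine (eta `]-oo, x]%classic).

(* value-at-risk x_pi(eta) = min {z | F_eta z >= pi}; the minimum is
   attained (right-continuity of F), so it coincides with the infimum *)
Definition VaR (R : realType) (pi : R) (eta : probability R R) : R :=
  inf [set z : R | pi <= cdf eta z].

Definition CVaR (R : realType) (pi : R) (eta : probability R R) : R :=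
  let x := VaR pi eta in
  (cdf eta x - pi) / (1 - pi) * x
  + (1 - pi)^-1 * fine (\int[eta]_(y in `]x, +oo[%classic) (y%:E)).

From Pilot Require Import Defs.
From HB Require Import structures.
From mathcomp Require Import all_boot all_order all_algebra.
From mathcomp Require Import all_classical all_reals all_analysis.
From mathcomp Require Import measurable_realfun ring lra.
Import Order.TTheory GRing.Theory Num.Theory.
Local Open Scope classical_set_scope.
Local Open Scope ring_scope.

(* Put p = 1 + eps.  Markov's inequality for |X|^p bounds both
   tails of eta: eta(]z, +oo[) <= B z^-p and F(z) <= B |z|^-p for z < 0; this
   traps the pi-quantile x_pi in the stated interval.  For the CVaR write
   (1 - pi) c_pi = (F(x_pi) - pi) x_pi + int_{]x_pi, +oo[} y d eta, the mean of
   the measure nu = (F(x_pi) - pi) delta_{x_pi} + eta|_{]x_pi, +oo[}, which has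
   mass 1 - pi and p-th moment at most B because the atom of eta at x_pi
   carries at least F(x_pi) - pi.  Hoelder's inequality for nu, obtained from
   Young's inequality at the optimal scale, gives the upper bound.  The lower
   bound holds because the tail mean dominates the mean, and
   E|X| <= B^(1/p). *)

Lemma powRV {R : realType} (a q : R) : 0 <= a -> a^-1 `^ q = a `^ (- q).
Proof. by move=> a0; rewrite -powR_inv1// -powRrM mulN1r. Qed.

Lemma powR_div {R : realType} (a b q : R) : 0 <= a -> 0 <= b ->
  (a / b) `^ q = a `^ q * b `^ (- q).
Proof. by move=> a0 b0; rewrite powRM ?invr_ge0// powRV. Qed.

Lemma powRVK {R : realType} (a p : R) : 0 <= a -> p != 0 ->
  (a `^ p^-1) `^ p = a.
Proof. by move=> a0 p0; rewrite -powRrM mulVf// powRr1. Qed.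

(* Young's inequality |y|/t * 1 <= (|y|/t)^p/p + 1/q, multiplied by t. *)
Lemma ler_young_powR {R : realType} (p t y : R) : 1 < p -> 0 < t ->
  `|y| <= `|y| `^ p * (t / (p * t `^ p)) + t * (1 - p^-1).
Proof.
move=> p1 t0; have p0 : 0 < p by apply: lt_trans p1.
have q0 : 0 < (1 - p^-1)^-1 by rewrite invr_gt0 subr_gt0 invf_lt1.
have := @conjugate_powR R (`|y| / t) 1 p _ (divr_ge0 (normr_ge0 _) (ltW t0))
  ler01 p0 q0.
rewrite invrK addrC subrK powR1 mulr1 => /(_ erefl).
rewrite powR_div ?(ltW t0)// powRN.
rewrite -(ler_pM2r t0) divfK ?gt_eqF// => /le_trans; apply.
have tp0 : t `^ p != 0 by rewrite gt_eqF ?powR_gt0.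
by rewrite le_eqVlt; apply/orP; left; apply/eqP; field; rewrite tp0 gt_eqF.
Qed.

Lemma measurable_norm_powR {R : realType} (p : R) :
  measurable_fun setT (fun y : R => `|y| `^ p).
Proof.
apply: (@measurableT_comp _ _ _ _ _ _ (fun x : R => x `^ p) _ (@Num.norm _ R)).
  exact: measurable_powR.
exact: normr_measurable.
Qed.

Section moments.
Context {R : realType} {mu : {finite_measure set R -> \bar R}} {p : R}.
Implicit Types (a c k t x z K : R) (A D : set R).
Hypothesis p1 : 1 < p.
Hypothesis integrable_moment :
  mu.-integrable setT (EFin \o (fun y => `|y| `^ p)).

Lemma integrable_moment_on [D] : measurable D ->
  mu.-integrable D (EFin \o (fun y => `|y| `^ p)).
Proof. by move=> mD; apply: integrableS integrable_moment. Qed.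

Lemma integrable_moment_scale [D] c : measurable D ->
  mu.-integrable D (EFin \o (fun y => `|y| `^ p * c)).
Proof.
move=> mD; have := integrableZr mD c (integrable_moment_on mD).
by apply: eq_integrable => // y _ /=; rewrite EFinM.
Qed.

Lemma integrable_young_bound [D] c k : measurable D ->
  mu.-integrable D (EFin \o (fun y => `|y| `^ p * c + k)).
Proof.
move=> mD; have := integrableD mD (integrable_moment_scale c mD)
  (finite_measure_integrable_cst mu k mD).
by apply: eq_integrable => // y _ /=; rewrite EFinD.
Qed.

Lemma integrable_norm [D] : measurable D ->
  mu.-integrable D (EFin \o (fun y => `|y|)).
Proof.
move=> mD; apply: le_integrable (integrable_young_bound (1 / (p * 1 `^ p))
  (1 * (1 - p^-1)) mD) => //.
  by apply/measurable_EFinP; exact: normr_measurable.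
move=> y _ /=; rewrite !lee_fin normr_id [leRHS]ger0_norm.
  exact: ler_young_powR.
exact: le_trans (normr_ge0 y) (ler_young_powR _ _ y p1 ltr01).
Qed.

Lemma integrable_id [D] : measurable D -> mu.-integrable D (EFin \o id).
Proof.
move=> mD; apply: le_integrable (integrable_norm mD) => //.
  exact/measurable_EFinP.
by move=> y _ /=; rewrite normr_id.
Qed.

Lemma markov_powR [A] z : measurable A -> 0 < z ->
  (forall y, A y -> z <= `|y|) ->
  fine (mu A) * z `^ p <= \int[mu]_(y in A) `|y| `^ p.
Proof.
move=> mA z0 Az; rewrite mulrC -Rintegral_cst//.
apply: le_Rintegral => //.
- exact: finite_measure_integrable_cst.
- exact: integrable_moment_on.
- move=> y Ay; apply: ge0_ler_powR; rewrite ?nnegrE ?Az ?(ltW z0)//.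
  exact: le_trans ler01 (ltW p1).
Qed.

Lemma first_moment_le_young [D] a x t : measurable D -> 0 <= a -> 0 < t ->
  a * `|x| + \int[mu]_(y in D) `|y| <=
  (a * `|x| `^ p + \int[mu]_(y in D) `|y| `^ p) * (t / (p * t `^ p))
  + t * (1 - p^-1) * (a + fine (mu D)).
Proof.
move=> mD a0 t0; have young y := ler_young_powR _ _ y p1 t0.
move: young; set c := t / _; set k := t * _; clearbody c k => young.
have ax : a * `|x| <= a * (`|x| `^ p * c + k) by rewrite ler_wpM2l.
have iD : \int[mu]_(y in D) `|y| <= \int[mu]_(y in D) (`|y| `^ p * c + k).
  apply: le_Rintegral => //; first exact: integrable_norm.
  exact: integrable_young_bound.
rewrite RintegralD ?RintegralZr ?Rintegral_cst ?integrable_moment_on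
  ?integrable_moment_scale ?finite_measure_integrable_cst// in iD.
apply: le_trans (lerD ax iD) _; rewrite le_eqVlt; apply/orP; left; apply/eqP.
ring.
Qed.

(* Hoelder's inequality for the measure a delta_x + mu|_D of mass s, from
   [first_moment_le_young] at the optimal scale t = (K / s)^(1/p). *)
Lemma first_moment_le [D] a x K : measurable D -> 0 <= a -> 0 < K ->
  0 < a + fine (mu D) ->
  a * `|x| `^ p + \int[mu]_(y in D) `|y| `^ p <= K ->
  a * `|x| + \int[mu]_(y in D) `|y| <=
  (a + fine (mu D)) * (K / (a + fine (mu D))) `^ p^-1.
Proof.
move=> mD a0 K0 s0 hK; have p0 : 0 < p := lt_trans ltr01 p1.
have t0 : 0 < (K / (a + fine (mu D))) `^ p^-1 by rewrite powR_gt0 ?divr_gt0.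
apply: le_trans (first_moment_le_young _ x _ mD a0 t0) _.
rewrite -powRrM mulVf ?gt_eqF// powRr1; last by rewrite divr_ge0 ?ltW.
move: hK t0 s0; set M := _ + _; set s := a + _; set t := _ `^ _.
move=> hK t0 s0; clearbody M s t.
have : M * (t / (p * (K / s))) <= K * (t / (p * (K / s))).
  by rewrite ler_wpM2r// divr_ge0 ?ltW// mulr_gt0 ?divr_gt0.
have -> : K * (t / (p * (K / s))) = s * t / p.
  by field; rewrite !gt_eqF.
lra.
Qed.
End moments.

Section cdf.
Context {R : realType} (eta : probability R R).
Implicit Types (x c : R) (A : set R).

Lemma fine_probabilityK A : measurable A -> (fine (eta A))%:E = eta A.
Proof. by move=> mA; rewrite fineK// fin_num_measure. Qed.

Lemma le_cdf : {homo Defs.cdf eta : x y / x <= y}.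
Proof.
move=> x y xy; rewrite /Defs.cdf -lee_fin !fine_probabilityK//.
apply: le_measure; rewrite ?inE// => z /=.
by rewrite !in_itv/= => /le_trans; apply.
Qed.

Lemma probability_itvoy x : fine (eta `]x, +oo[%classic) = 1 - Defs.cdf eta x.
Proof.
apply/EFin_inj; rewrite fine_probabilityK// EFinB /Defs.cdf fine_probabilityK//.
by rewrite -setCitvl probability_setC.
Qed.

Lemma itvcy_setU1 x : `[x, +oo[%classic = [set x] `|` `]x, +oo[%classic.
Proof. by rewrite setU1itv. Qed.

Lemma set1I_itvoy x : [set x] `&` `]x, +oo[%classic = set0.
Proof. by apply/seteqP; split=> // y [/= ->]; rewrite /= in_itv/= ltxx. Qed.

Lemma probability_itvcy_atom x :
  fine (eta `[x, +oo[%classic) = fine (eta [set x]) + (1 - Defs.cdf eta x).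
Proof.
apply/EFin_inj; rewrite EFinD -probability_itvoy !fine_probabilityK//.
by rewrite itvcy_setU1 measureU// set1I_itvoy.
Qed.

Lemma ge_fine_probability_bigcap (G : (set R)^nat) c :
  (forall n, measurable (G n)) -> nonincreasing_seq G ->
  (forall n, c <= fine (eta (G n))) -> c <= fine (eta (\bigcap_n G n)).
Proof.
move=> mG niG cG; have mcapG := bigcapT_measurable mG.
have G0 : (eta (G 0%N) < +oo)%E by rewrite -fine_probabilityK ?ltry.
have cvgG := nonincreasing_cvg_mu G0 mG mcapG niG.
rewrite -lee_fin fine_probabilityK// -(cvg_lim _ cvgG)//.
apply: lime_ge; first by apply/cvg_ex; exists (eta (\bigcap_n G n)).
by apply: nearW => n; rewrite /= -fine_probabilityK ?lee_fin.
Qed.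
End cdf.

Section risk_measures.
Context {R : realType} (eta : probability R R) (p B pi : R).
Hypotheses (p1 : 1 < p) (B0 : 0 < B) (pi0 : 0 < pi) (pi1 : pi < 1).
Hypothesis moment : (\int[eta]_y (`|y| `^ p)%:E <= B%:E)%E.
Implicit Types (x z : R) (D : set R).

Let p0 : 0 < p. Proof. exact: lt_trans ltr01 p1. Qed.

Lemma moment_integrable : eta.-integrable setT (EFin \o (fun y => `|y| `^ p)).
Proof.
apply/integrableP; split.
  by apply/measurable_EFinP; exact: measurable_norm_powR.
apply: le_lt_trans (ltry B); apply: le_trans moment; rewrite le_eqVlt.
apply/orP; left; apply/eqP/eq_integral => y _ /=.
by rewrite ger0_norm ?powR_ge0.
Qed.

Lemma moment_le [D] : measurable D -> \int[eta]_(y in D) `|y| `^ p <= B.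
Proof.
move=> mD; rewrite -lee_fin fineK; last first.
  exact: integrable_fin_num (integrable_moment_on moment_integrable mD).
apply: le_trans moment; apply: ge0_subset_integral => //.
by apply/measurable_EFinP; exact: measurable_norm_powR.
Qed.

Lemma le_cdf_of_gt_upper z : B `^ p^-1 * (1 - pi) `^ (- p^-1) < z ->
  pi <= Defs.cdf eta z.
Proof.
rewrite -powR_div ?(ltW B0) ?subr_ge0 ?(ltW pi1)// => Uz.
have z0 : 0 < z := le_lt_trans (powR_ge0 _ _) Uz.
have Bp0 : 0 <= B / (1 - pi) by rewrite divr_ge0 ?subr_ge0 ?ltW.
have : B / (1 - pi) < z `^ p.
  rewrite -(powRVK _ p Bp0 (lt0r_neq0 p0)).
  by rewrite gt0_ltr_powR ?nnegrE ?powR_ge0 ?ltW.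
rewrite ltr_pdivrMr ?subr_gt0// => zp.
have tail : (1 - Defs.cdf eta z) * z `^ p <= B.
  rewrite -probability_itvoy; apply: le_trans _ (moment_le (measurable_itv _)).
  apply: (markov_powR p1 moment_integrable) z0 _ => // y /=.
  by rewrite in_itv/= andbT => /ltW /le_trans; apply; exact: ler_norm.
have : (1 - Defs.cdf eta z) * z `^ p < (1 - pi) * z `^ p by lra.
rewrite ltr_pM2r ?powR_gt0//; lra.
Qed.

Lemma ge_lower_of_le_cdf z : pi <= Defs.cdf eta z ->
  - B `^ p^-1 * pi `^ (- p^-1) <= z.
Proof.
rewrite mulNr -powR_div ?(ltW B0) ?(ltW pi0)// => Fz.
rewrite lerNl leNgt; apply/negP => Lz.
have z0 : 0 < - z := le_lt_trans (powR_ge0 _ _) Lz.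
have Bp0 : 0 <= B / pi by rewrite divr_ge0 ?ltW.
have : B / pi < (- z) `^ p.
  rewrite -(powRVK _ p Bp0 (lt0r_neq0 p0)).
  by rewrite gt0_ltr_powR ?nnegrE ?powR_ge0 ?ltW.
rewrite ltr_pdivrMr// => zp.
have head : Defs.cdf eta z * (- z) `^ p <= B.
  apply: le_trans _ (moment_le (measurable_itv _)).
  apply: (markov_powR p1 moment_integrable) z0 _ => // y /=.
  by rewrite in_itv/= => yz; rewrite ler_normr lerN2 yz orbT.
have : pi * (- z) `^ p <= Defs.cdf eta z * (- z) `^ p.
  by rewrite ler_wpM2r ?powR_ge0.
lra.
Qed.

Let quantile_set := [set z | pi <= Defs.cdf eta z].

Let VaRE : VaR pi eta = inf quantile_set. Proof. by []. Qed.

Let quantile_set_nonempty : quantile_set !=set0.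
Proof.
exists (B `^ p^-1 * (1 - pi) `^ (- p^-1) + 1).
by apply: le_cdf_of_gt_upper; rewrite ltrDl.
Qed.

Let quantile_set_lbound : has_lbound quantile_set.
Proof.
by exists (- B `^ p^-1 * pi `^ (- p^-1)) => z; exact: ge_lower_of_le_cdf.
Qed.

Lemma VaR_ge : - B `^ p^-1 * pi `^ (- p^-1) <= VaR pi eta.
Proof.
rewrite VaRE; apply: lb_le_inf quantile_set_nonempty _ => z.
exact: ge_lower_of_le_cdf.
Qed.

Lemma VaR_le : VaR pi eta <= B `^ p^-1 * (1 - pi) `^ (- p^-1).
Proof.
rewrite VaRE; apply/ler_addgt0Pr => e e0; apply: (ge_inf quantile_set_lbound).
by apply: le_cdf_of_gt_upper; rewrite ltrDl.
Qed.

Lemma cdf_VaR_ge : pi <= Defs.cdf eta (VaR pi eta).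
Proof.
rewrite /Defs.cdf (itvNycEbigcap false); apply: ge_fine_probability_bigcap.
- by move=> n; exact: measurable_itv.
- move=> m n mn; apply/subsetPset/subset_itvl.
  by rewrite bnd_simp lerD2l lef_pV2 ?posrE// ler_nat.
- move=> n; have : inf quantile_set < VaR pi eta + n.+1%:R^-1.
    by rewrite VaRE ltrDl.
  case/(inf_lt quantile_set_nonempty) => z Fz /ltW zV.
  exact: le_trans Fz (le_cdf eta _ _ zV).
Qed.

Lemma probability_itvcy_VaR_ge :
  1 - pi <= fine (eta `[VaR pi eta, +oo[%classic).
Proof.
rewrite itvcyEbigcap; apply: ge_fine_probability_bigcap.
- by move=> n; exact: measurable_itv.
- move=> m n mn; apply/subsetPset/subset_itvr.
  by rewrite bnd_simp lerD2l lerN2 lef_pV2 ?posrE// ler_nat.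
- move=> n; rewrite probability_itvoy lerD2l lerN2 leNgt; apply/negP => Fz.
  have : inf quantile_set <= VaR pi eta - n.+1%:R^-1 by exact/ge_inf/ltW.
  by rewrite -VaRE lerDl oppr_ge0 leNgt invr_gt0 ltr0n.
Qed.

Let integrable_id_on [D] : measurable D -> eta.-integrable D (EFin \o id).
Proof. by move=> mD; have := integrable_id p1 moment_integrable mD. Qed.

Lemma CVaRE : CVaR pi eta = ((Defs.cdf eta (VaR pi eta) - pi) * VaR pi eta
  + \int[eta]_(y in `]VaR pi eta, +oo[%classic) y) / (1 - pi).
Proof.
rewrite /CVaR.
change (fine _) with (\int[eta]_(y in `]VaR pi eta, +oo[%classic) y).
by field; rewrite subr_eq0 gt_eqF.
Qed.

(* The difference of the two sides is
   pi (I - x (1 - F x)) + (1 - pi) (x F x - J) with I, J the integrals of y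
   over ]x, +oo[ and ]-oo, x]; both terms are nonnegative. *)
Lemma mean_le_tail_mean x : (1 - pi) * \int[eta]_y y <=
  (Defs.cdf eta x - pi) * x + \int[eta]_(y in `]x, +oo[%classic) y.
Proof.
have mle : measurable (`]-oo, x]%classic : set R) by exact: measurable_itv.
have mgt : measurable (`]x, +oo[%classic : set R) by exact: measurable_itv.
have -> : \int[eta]_y y = \int[eta]_(y in `]-oo, x]%classic) y
    + \int[eta]_(y in `]x, +oo[%classic) y.
  rewrite -Rintegral_setU ?itv_setU_setT ?integrable_id_on//.
  by rewrite -setCitvl disj_set2E setICr.
have head : \int[eta]_(y in `]-oo, x]%classic) y <= x * Defs.cdf eta x.
  rewrite /Defs.cdf -Rintegral_cst//; apply: le_Rintegral => //.
    exact: integrable_id_on.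
  exact: finite_measure_integrable_cst.
have tail : x * (1 - Defs.cdf eta x) <= \int[eta]_(y in `]x, +oo[%classic) y.
  rewrite -probability_itvoy -Rintegral_cst//; apply: le_Rintegral => //.
  - exact: finite_measure_integrable_cst.
  - exact: integrable_id_on.
  - by move=> y /=; rewrite in_itv/= andbT => /ltW.
set J := \int[eta]_(y in _) _ in head *.
set I := \int[eta]_(y in _) _ in tail *.
have : 0 <= pi * (I - x * (1 - Defs.cdf eta x)).
  by rewrite mulr_ge0 ?subr_ge0 ?(ltW pi0).
have : 0 <= (1 - pi) * (x * Defs.cdf eta x - J).
  by rewrite mulr_ge0 ?subr_ge0 ?(ltW pi1).
lra.
Qed.

Lemma cdf_VaR_le_atom :
  Defs.cdf eta (VaR pi eta) - pi <= fine (eta [set VaR pi eta]).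
Proof.
by have := probability_itvcy_VaR_ge; rewrite probability_itvcy_atom; lra.
Qed.

Lemma moment_atom_tail_le x :
  fine (eta [set x]) * `|x| `^ p
  + \int[eta]_(y in `]x, +oo[%classic) `|y| `^ p <= B.
Proof.
apply: le_trans (moment_le (measurable_itv `[x, +oo[)).
rewrite itvcy_setU1 Rintegral_setU//; last 2 first.
- rewrite -itvcy_setU1; exact: (integrable_moment_on moment_integrable).
- by rewrite disj_set2E set1I_itvoy.
rewrite (@eq_Rintegral _ _ _ eta [set x] (fun=> `|x| `^ p)) ?Rintegral_cst//.
  by rewrite mulrC.
by move=> y; rewrite inE => ->.
Qed.

Lemma CVaR_ge : - B `^ p^-1 <= CVaR pi eta.
Proof.
have abs_mean : \int[eta]_y `|y| <= B `^ p^-1.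
  have := first_moment_le p1 moment_integrable 0 0 B measurableT (lexx 0) B0.
  have -> : fine (eta setT) = 1 by rewrite probability_setT.
  rewrite !mul0r !add0r divr1 mul1r; apply=> //.
  exact: moment_le.
have := le_normr_Rintegral measurableT (integrable_id_on measurableT).
rewrite ler_norml => /andP[mean_ge _].
rewrite CVaRE ler_pdivlMr ?subr_gt0//.
apply: le_trans (mean_le_tail_mean _).
rewrite mulrC ler_wpM2l ?subr_ge0 ?(ltW pi1)//.
lra.
Qed.

Lemma CVaR_le : CVaR pi eta <= B `^ p^-1 * (1 - pi) `^ (- p^-1).
Proof.
rewrite CVaRE ler_pdivrMr ?subr_gt0//.
rewrite -powR_div ?subr_ge0 ?(ltW B0) ?(ltW pi1)//.
have Fpi := cdf_VaR_ge; have atom := cdf_VaR_le_atom.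
have := moment_atom_tail_le (VaR pi eta).
have := probability_itvoy eta (VaR pi eta).
set x := VaR pi eta in Fpi atom *; set F := Defs.cdf eta x in Fpi atom *.
set m := fine (eta [set x]) in atom *; set P := \int[eta]_(y in _) _.
move=> tail tail_moment.
have mG : measurable (`]x, +oo[%classic : set R) by exact: measurable_itv.
have := first_moment_le p1 moment_integrable (F - pi) x B mG.
rewrite tail -/P (_ : F - pi + (1 - F) = 1 - pi); last by ring.
have atom_moment : (F - pi) * `|x| `^ p + P <= B.
  by apply: le_trans tail_moment; rewrite lerD2r ler_wpM2r ?powR_ge0.
rewrite subr_ge0 subr_gt0 => /(_ Fpi B0 pi1 atom_moment) bound.
have Ile : \int[eta]_(y in `]x, +oo[%classic) y <=
    \int[eta]_(y in `]x, +oo[%classic) `|y|.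
  exact: le_trans (ler_norm _) (le_normr_Rintegral mG (integrable_id_on mG)).
rewrite [leRHS]mulrC; apply: le_trans bound; apply: lerD Ile.
by rewrite ler_wpM2l ?subr_ge0 ?ler_norm.
Qed.

End risk_measures.

Theorem lemma1 (R : realType) (pi eps B : R)
  (hpi0 : 0 < pi) (hpi1 : pi < 1) (heps : 0 < eps) (hB : 0 < B)
  (eta : probability R R) (hL : in_L eps B eta) :
  - B `^ (1 + eps)^-1 <= CVaR pi eta
  /\ CVaR pi eta <= B `^ (1 + eps)^-1 * (1 - pi) `^ (- (1 + eps)^-1)
  /\ - B `^ (1 + eps)^-1 * pi `^ (- (1 + eps)^-1) <= VaR pi eta
  /\ VaR pi eta <= B `^ (1 + eps)^-1 * (1 - pi) `^ (- (1 + eps)^-1).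
Proof.
have p1 : 1 < 1 + eps by rewrite ltrDl.
split; first by apply: CVaR_ge.
split; first by apply: CVaR_le.
by split; [apply: VaR_ge | apply: VaR_le].
Qed.
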